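(* Let $u\in(0,1]$, $\beta\in(0,1)$ and $\tau_k\triangleq\lceil(k+1)^u\rceil$ for $k\ge0$. Then for every $k\ge1$, $$\sum_{s=1}^k\beta^{\sum_{p=s}^k\tau_p}\le e\big(\ln(\beta^{-1/(u+1)})\big)^{-\frac{1}{u+1}}\beta^{\frac{(k+1)^{u+1}}{u+1}}+\beta^{\frac{(k+1)^{u+1}-k^{u+1}}{u+1}}\Big(1+\frac{u+1}{k^u\ln(1/\beta)}\Big).$$ *)

From Stdlib Require Import Reals ZArith.
Open Scope R_scope.

(* floor y = up y - 1, since up y is the unique integer with y < up y <= y + 1 *)
Definition Rceil (x : R) : Z := (1 - up (- x))%Z.

Definition tau (u : R) (k : nat) : R := IZR (Rceil (Rpower (INR k + 1) u)).

(* sum_{p=s}^{k} f p *)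
Fixpoint sum_from_to (f : nat -> R) (s k : nat) : R :=
  match k with
  | O => if Nat.leb s 0 then f 0%nat else 0
  | S k' => sum_from_to f s k' + (if Nat.leb s (S k') then f (S k') else 0)
  end.

(* Since tau_p >= (p+1)^u >= ((p+1)^(u+1) - p^(u+1))/(u+1) by the mean value theorem,
   the inner sum telescopes to at least ((k+1)^(u+1) - s^(u+1))/(u+1).  With
   c = ln(1/beta)/(u+1), the s-th term is thus at most beta^((k+1)^(u+1)/(u+1)) g(s),
   where g(x) = exp(c x^(u+1)).  Below x0 = c^(-1/(u+1)) we have g <= e, which gives
   the term e x0.  Above x0 the function F(x) = g(x)/(c x^u) has
   F' = g ((u+1) - u/(c x^(u+1))) >= g, so g(p) <= F(p+1) - F(p) and the remaining
   terms add up to at most g(k) + F(k), the second summand. *)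

From Stdlib Require Import Reals Lra Lia.
From Coquelicot Require Import Coquelicot.
Open Scope R_scope.

Lemma exp_le_exp x y : x <= y -> exp x <= exp y.
Proof. intros [Hlt | ->]; [now left; apply exp_increasing | lra]. Qed.

Lemma Rceil_ge x : x <= IZR (Rceil x).
Proof. unfold Rceil. rewrite minus_IZR. destruct (archimed (- x)). lra. Qed.

Lemma Rpower_pos x y : 0 < Rpower x y.
Proof. apply exp_pos. Qed.

Lemma Rpower_le_anti b x y : 0 < b < 1 -> x <= y -> Rpower b y <= Rpower b x.
Proof.
  intros Hb Hxy. unfold Rpower. apply exp_le_exp.
  assert (ln b < 0) by (rewrite <- ln_1; apply ln_increasing; lra).
  nra.
Qed.

Lemma Rpower_div_sub b a P y : 0 < b -> a <> 0 ->
  Rpower b ((P - y) / a) = Rpower b (P / a) * exp (ln (1 / b) / a * y).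
Proof.
  intros Hb Ha. unfold Rpower. rewrite <- exp_plus, ln_div, ln_1 by lra.
  f_equal. field. exact Ha.
Qed.

Lemma sum_from_to_lt f s k : (k < s)%nat -> sum_from_to f s k = 0.
Proof.
  induction k as [|k IH]; intros Hks; simpl.
  - destruct s; [lia | reflexivity].
  - rewrite IH by lia. destruct (Nat.leb_spec s (S k)); [lia | lra].
Qed.

Lemma sum_from_to_S f s k : (s <= S k)%nat ->
  sum_from_to f s (S k) = sum_from_to f s k + f (S k).
Proof. intros Hs. simpl. apply Nat.leb_le in Hs. now rewrite Hs. Qed.

Lemma sum_from_to_le f g s k : (forall p, (s <= p <= k)%nat -> f p <= g p) ->
  sum_from_to f s k <= sum_from_to g s k.
Proof.
  induction k as [|k IH]; intros Hfg; simpl.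
  - destruct (Nat.leb_spec s 0); [apply Hfg; lia | lra].
  - apply Rplus_le_compat; [apply IH; intros; apply Hfg; lia |].
    destruct (Nat.leb_spec s (S k)); [apply Hfg; lia | lra].
Qed.

Lemma sum_from_to_scal B f s k :
  sum_from_to (fun p => B * f p) s k = B * sum_from_to f s k.
Proof.
  induction k as [|k IH]; simpl.
  - destruct (Nat.leb s 0); ring.
  - rewrite IH. destruct (Nat.leb s (S k)); ring.
Qed.

Lemma sum_from_to_telescope_ge f h s k :
  (forall p, (s <= p <= k)%nat -> h (S p) - h p <= f p) -> (s <= S k)%nat ->
  h (S k) - h s <= sum_from_to f s k.
Proof.
  revert s; induction k as [|k IH]; intros s Hf Hs.
  - simpl. destruct s as [|[|s]]; simpl; [apply Hf; lia | lra | lia].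
  - destruct (Nat.eq_dec s (S (S k))) as [-> | Hne].
    + rewrite sum_from_to_lt by lia. lra.
    + rewrite sum_from_to_S by lia.
      assert (h (S k) - h s <= sum_from_to f s k) by (apply IH; [intros; apply Hf |]; lia).
      assert (h (S (S k)) - h (S k) <= f (S k)) by (apply Hf; lia).
      lra.
Qed.

Lemma Rpower_succ_sub_le a x : 0 <= a -> 0 < x ->
  Rpower (x + 1) (a + 1) - Rpower x (a + 1) <= (a + 1) * Rpower (x + 1) a.
Proof.
  intros Ha Hx.
  destruct (MVT_cor2 (fun y => Rpower y (a + 1)) (fun y => (a + 1) * Rpower y a) x (x + 1))
    as [xi [-> Hxi]]; [lra | |].
  - intros y Hy. apply is_derive_Reals. unfold Rpower.
    auto_derive; [lra |].
    replace ((a + 1) * ln y) with (a * ln y + ln y) by ring.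
    rewrite exp_plus, exp_ln by lra. field. lra.
  - replace (x + 1 - x) with 1 by ring. rewrite Rmult_1_r.
    apply Rmult_le_compat_l; [lra |]. apply Rle_Rpower_l; lra.
Qed.

Lemma tau_sum_ge u s k : 0 < u -> (1 <= s <= S k)%nat ->
  (Rpower (INR k + 1) (u + 1) - Rpower (INR s) (u + 1)) / (u + 1)
  <= sum_from_to (tau u) s k.
Proof.
  intros Hu Hs. rewrite <- S_INR, RIneq.Rdiv_minus_distr.
  apply (sum_from_to_telescope_ge _ (fun p => Rpower (INR p) (u + 1) / (u + 1))); [| lia].
  intros p Hp; cbv beta. rewrite <- RIneq.Rdiv_minus_distr, S_INR.
  unfold tau. eapply Rle_trans; [| apply Rceil_ge].
  apply Rmult_le_reg_l with (u + 1); [lra |].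
  replace ((u + 1) * (_ / (u + 1))) with
    (Rpower (INR p + 1) (u + 1) - Rpower (INR p) (u + 1)) by (field; lra).
  apply Rpower_succ_sub_le; [lra |]. apply lt_0_INR. lia.
Qed.

Section GrowthSum.

Variables c u : R.
Hypothesis Hc : 0 < c.
Hypothesis Hu : 0 <= u.

Definition growth x := exp (c * Rpower x (u + 1)).

Definition growth_prim x := growth x / (c * Rpower x u).

Definition growth_threshold := Rpower c (- (1 / (u + 1))).

Lemma ln_growth_arg x : 0 < x ->
  ln (c * Rpower x (u + 1)) = (u + 1) * (ln x - ln growth_threshold).
Proof.
  intros Hx. unfold growth_threshold.
  rewrite ln_mult, !ln_Rpower by (try apply Rpower_pos; lra). field. lra.
Qed.

Lemma growth_arg_le_1 x : 0 < x -> x <= growth_threshold -> c * Rpower x (u + 1) <= 1.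
Proof.
  intros Hx Hx0. apply Rnot_lt_le. intros Hgt.
  apply ln_increasing in Hgt; [| lra]. rewrite ln_1, ln_growth_arg in Hgt by exact Hx.
  assert (ln x <= ln growth_threshold) by (apply ln_le; lra). nra.
Qed.

Lemma growth_arg_gt_1 x : 0 < x -> growth_threshold < x -> 1 < c * Rpower x (u + 1).
Proof.
  intros Hx Hx0.
  apply ln_lt_inv; [lra | apply Rmult_lt_0_compat; [lra | apply Rpower_pos] |].
  rewrite ln_1, ln_growth_arg by exact Hx.
  assert (ln growth_threshold < ln x) by (apply ln_increasing; [apply Rpower_pos | lra]). nra.
Qed.

Lemma growth_le_e x : 0 < x -> x <= growth_threshold -> growth x <= exp 1.
Proof. intros. apply exp_le_exp. now apply growth_arg_le_1. Qed.

Lemma growth_le x y : 0 < x <= y -> growth x <= growth y.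
Proof.
  intros Hxy. apply exp_le_exp, Rmult_le_compat_l; [lra |].
  apply Rle_Rpower_l; lra.
Qed.

Lemma growth_prim_ge0 x : 0 <= growth_prim x.
Proof.
  apply Rlt_le, Rdiv_lt_0_compat; [apply exp_pos |].
  apply Rmult_lt_0_compat; [lra | apply Rpower_pos].
Qed.

Lemma growth_prim_derive x : 0 < x ->
  derivable_pt_lim growth_prim x (growth x * ((u + 1) - u / (c * Rpower x (u + 1)))).
Proof.
  intros Hx. apply is_derive_Reals. unfold growth_prim, growth, Rpower.
  assert (0 < exp (u * ln x)) by apply exp_pos.
  auto_derive.
  - repeat split; try lra. apply Rgt_not_eq, Rmult_gt_0_compat; lra.
  - replace ((u + 1) * ln x) with (u * ln x + ln x) by ring.
    rewrite exp_plus, exp_ln by exact Hx. field. repeat split; lra.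
Qed.

Lemma growth_le_prim_succ_sub x : 0 < x -> growth_threshold < x ->
  growth x <= growth_prim (x + 1) - growth_prim x.
Proof.
  intros Hx Hx0.
  destruct (MVT_cor2 growth_prim
              (fun y => growth y * ((u + 1) - u / (c * Rpower y (u + 1)))) x (x + 1))
    as [xi [-> Hxi]]; [lra | intros; apply growth_prim_derive; lra |].
  replace (x + 1 - x) with 1 by ring. rewrite Rmult_1_r.
  assert (Hbig : 1 < c * Rpower xi (u + 1)) by (apply growth_arg_gt_1; lra).
  assert (u / (c * Rpower xi (u + 1)) <= u).
  { apply Rmult_le_reg_r with (c * Rpower xi (u + 1)); [lra |].
    unfold Rdiv. rewrite Rmult_assoc, Rinv_l, Rmult_1_r by lra. nra. }
  assert (growth x <= growth xi) by (apply growth_le; lra).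
  assert (0 < growth xi) by apply exp_pos.
  nra.
Qed.

Lemma sum_growth_below_threshold n : INR n <= growth_threshold ->
  sum_from_to (fun p => growth (INR p)) 1 n <= exp 1 * INR n.
Proof.
  induction n as [|n IH]; intros Hn; [simpl; lra |].
  rewrite sum_from_to_S, S_INR in * by lia.
  pose proof (pos_INR n).
  assert (growth (INR n + 1) <= exp 1) by (apply growth_le_e; lra).
  assert (sum_from_to (fun p => growth (INR p)) 1 n <= exp 1 * INR n) by (apply IH; lra).
  lra.
Qed.

Lemma sum_growth_le_prim_succ n :
  sum_from_to (fun p => growth (INR p)) 1 n
  <= exp 1 * growth_threshold + growth_prim (INR n + 1).
Proof.
  pose proof (exp_pos 1).
  induction n as [|n IH].
  - change (sum_from_to _ 1 0) with 0.
    pose proof (Rpower_pos c (- (1 / (u + 1)))). pose proof (growth_prim_ge0 (INR 0 + 1)).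
    unfold growth_threshold. nra.
  - destruct (Rle_lt_dec (INR (S n)) growth_threshold) as [Hle | Hgt].
    + pose proof (sum_growth_below_threshold _ Hle). pose proof (growth_prim_ge0 (INR (S n) + 1)).
      assert (exp 1 * INR (S n) <= exp 1 * growth_threshold) by (apply Rmult_le_compat_l; lra).
      lra.
    + rewrite sum_from_to_S, S_INR in * by lia.
      assert (growth (INR n + 1) <= growth_prim (INR n + 1 + 1) - growth_prim (INR n + 1))
        by (apply growth_le_prim_succ_sub; [pose proof (pos_INR n) |]; lra).
      lra.
Qed.

Lemma sum_growth_le n : (1 <= n)%nat ->
  sum_from_to (fun p => growth (INR p)) 1 n
  <= exp 1 * growth_threshold + growth (INR n) + growth_prim (INR n).
Proof.
  intros Hn. destruct n as [|n]; [lia |].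
  rewrite sum_from_to_S, S_INR by lia.
  pose proof (sum_growth_le_prim_succ n). lra.
Qed.

End GrowthSum.

Lemma discounted_tau_tail_le u beta s k : 0 < u -> 0 < beta < 1 -> (1 <= s <= k)%nat ->
  Rpower beta (sum_from_to (tau u) s k)
  <= Rpower beta (Rpower (INR k + 1) (u + 1) / (u + 1))
     * growth (ln (1 / beta) / (u + 1)) u (INR s).
Proof.
  intros Hu Hb Hs. unfold growth.
  rewrite <- Rpower_div_sub by lra.
  apply Rpower_le_anti; [exact Hb |]. apply tau_sum_ge; [exact Hu | lia].
Qed.

Theorem lemma7 (u beta : R) (k : nat)
  (hu0 : 0 < u) (hu1 : u <= 1) (hb0 : 0 < beta) (hb1 : beta < 1)
  (hk : (1 <= k)%nat) :
  sum_from_to (fun s => Rpower beta (sum_from_to (tau u) s k)) 1 k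
  <= exp 1 * Rpower (ln (Rpower beta (- (1 / (u + 1))))) (- (1 / (u + 1)))
       * Rpower beta (Rpower (INR k + 1) (u + 1) / (u + 1))
     + Rpower beta ((Rpower (INR k + 1) (u + 1) - Rpower (INR k) (u + 1)) / (u + 1))
       * (1 + (u + 1) / (Rpower (INR k) u * ln (1 / beta))).
Proof.
  set (c := ln (1 / beta) / (u + 1)).
  set (B := Rpower beta (Rpower (INR k + 1) (u + 1) / (u + 1))).
  assert (HL : 0 < ln (1 / beta)).
  { rewrite <- ln_1. apply ln_increasing; [lra |]. apply Rlt_div_r; lra. }
  assert (Hc : 0 < c) by (apply Rdiv_lt_0_compat; lra).
  assert (HB : 0 < B) by apply Rpower_pos.
  assert (Hsum : sum_from_to (fun s => Rpower beta (sum_from_to (tau u) s k)) 1 k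
                 <= B * sum_from_to (fun p => growth c u (INR p)) 1 k).
  { rewrite <- sum_from_to_scal. apply sum_from_to_le. intros p Hp.
    apply discounted_tau_tail_le; [exact hu0 | lra | exact Hp]. }
  assert (Hthreshold : ln (Rpower beta (- (1 / (u + 1)))) = c).
  { unfold c. rewrite ln_Rpower, ln_div, ln_1 by lra. field. lra. }
  assert (Hlast : Rpower beta ((Rpower (INR k + 1) (u + 1) - Rpower (INR k) (u + 1)) / (u + 1))
                  = B * growth c u (INR k)) by (apply Rpower_div_sub; lra).
  assert (Hprim : growth c u (INR k) * ((u + 1) / (Rpower (INR k) u * ln (1 / beta)))
                  = growth_prim c u (INR k)).
  { unfold growth_prim, c. pose proof (Rpower_pos (INR k) u). field. lra. }
  pose proof (sum_growth_le c u Hc (Rlt_le _ _ hu0) k hk) as Hgrowth.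
  rewrite Hthreshold, Hlast. fold B. unfold growth_threshold in *. nra.
Qed.
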